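(* Let $k\ge1$, and let $a,b$ be integers with $b\ge1$, $0\le a\le b$ and $k\equiv a\pmod b$. Then $N\big((k+1+a-b)(k-a)/b,\;k\big)=(k-a)/b$.
   Context: For $n>k\ge1$, $N(n,k)$ is the nullity of the $n\times n$ skew-symmetric Toeplitz matrix $A(n,k)$ whose first $k$ superdiagonals have all entries $1$ and whose remaining superdiagonals have all entries $0$. This nullity depends only on $n\bmod (k^2+k)$, and $N(n,k)$ is defined for every integer $n$ as $N(n',k)$ for any $n'>k$ with $n'\equiv n\pmod{k^2+k}$. *)

From mathcomp Require Import all_boot all_order all_algebra.
Set Implicit Arguments. Unset Strict Implicit. Unset Printing Implicit Defensive.
Import Order.TTheory GRing.Theory Num.Theory.
Local Open Scope ring_scope.

Definition Amat (n k : nat) : 'M[rat]_n :=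
  \matrix_(i < n, j < n)
    if ((i < j)%N && (j <= i + k)%N) then 1
    else if ((j < i)%N && (i <= j + k)%N) then -1 else 0.

Definition nullity (n k : nat) : nat := (n - \rank (Amat n k))%N.

Definition rep (n : int) (k : nat) : nat :=
  (k.+1 + `|((n - k.+1%:Z) %% (k ^ 2 + k)%N%:Z)%Z|)%N.

(* N(n,k) for an arbitrary integer n (paper's extension by periodicity). *)
Definition Nnull (n : int) (k : nat) : nat := nullity (rep n k) k.

(* Let S(t) be the prefix sums of a row vector u, so S vanishes below 1 and is constant from N
   on.  The equation u A(N, k) = 0 says exactly that the window sums S(t) - S(t-k-1) are
   k-periodic, i.e. S(t) = S(t-k-1) + y(t) for a k-periodic y; conversely every k-periodic y
   whose recurrence solution S is constant on [N, N+k] yields a kernel vector.  For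
   N = M(k+1) - s0 with M = m (mod k), this constancy is a set of k linear conditions relating
   y(r+m) to y(r) or y(r-1); they determine y from y(1), ..., y(m), so the nullity is at most m.
   When k = (m+1)a + md and s0 = md, they say precisely that y is constant on explicit classes of
   residues mod k, one of which is forced to vanish, and the indicators of the m other classes
   give m independent kernel vectors.  The theorem is the case d = b - a, m = (k-a)/b, for which
   n = m(k+1-d). *)

From mathcomp Require Import all_boot all_order all_algebra.
From mathcomp Require Import zify ring lra.
Set Implicit Arguments. Unset Strict Implicit. Unset Printing Implicit Defensive.
Import Order.TTheory GRing.Theory Num.Theory.
Local Open Scope ring_scope.

Lemma modz_eq (x q : int) (d : nat) : 0 <= x - q * d%:Z -> x - q * d%:Z < d%:Z ->
  (x %% d%:Z)%Z = x - q * d%:Z.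
Proof.
move=> ge0 lt_d; rewrite {1}(_ : x = q * d%:Z + (x - q * d%:Z)); last by ring.
by rewrite modzMDl modz_small ?ge0.
Qed.

Lemma eqz_modP (x y d : int) : (x = y %[mod d])%Z -> exists q : int, x = y + q * d.
Proof.
by move/eqP; rewrite eqz_mod_dvd => /dvdzP[q /eqP]; rewrite subr_eq addrC => /eqP; exists q.
Qed.

Section PrefixSums.
Variables (N : nat) (u : 'rV[rat]_N).

Definition psum (t : int) : rat := \sum_(i < N | i%:Z < t) u 0 i.

Lemma psum_le0 t : t <= 0 -> psum t = 0.
Proof. by move=> t_le0; rewrite /psum big_pred0 // => i; lia. Qed.

Lemma psum_ge t : N%:Z <= t -> psum t = psum N%:Z.
Proof. by move=> le_N_t; apply: eq_bigl => i; have := ltn_ord i; lia. Qed.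

Lemma psumB lo hi : lo <= hi ->
  psum hi - psum lo = \sum_(i < N | (lo <= i%:Z) && (i%:Z < hi)) u 0 i.
Proof.
move=> le_lo_hi; rewrite /psum big_mkcond [RHS]big_mkcond [X in _ - X]big_mkcond -sumrB.
apply: eq_bigr => i _; case: (boolP (i%:Z < lo)) => lt_i_lo.
  by rewrite ifT ?subrr //; [rewrite ifF //|]; lia.
by rewrite subr0 andbC; congr (if _ then _ else _); lia.
Qed.

Lemma psum_succ (i : 'I_N) : psum (i%:Z + 1) - psum i%:Z = u 0 i.
Proof.
rewrite psumB ?lerDl // (big_pred1 i) // => j.
by apply/andP/eqP => [[le_ij lt_ji]|->]; [apply: val_inj => /=; lia | lia].
Qed.

Lemma mulmx_Amat k (j : 'I_N) : (u *m Amat N k) 0 j =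
  (psum j%:Z - psum (j%:Z - k%:Z)) - (psum (j%:Z + k%:Z + 1) - psum (j%:Z + 1)).
Proof.
rewrite !psumB ?mxE; [|lia|lia].
rewrite !(big_mkcond (fun i => _ && _)) -sumrB; apply: eq_bigr => i _; rewrite !mxE.
have -> : ((i < j) && (j <= i + k))%N = (j%:Z - k%:Z <= i%:Z) && (i%:Z < j%:Z) by lia.
have -> : ((j < i) && (i <= j + k))%N = (j%:Z + 1 <= i%:Z) && (i%:Z < j%:Z + k%:Z + 1) by lia.
case: ifP => [below|_]; first by rewrite ifF ?mulr1 ?subr0 //; lia.
by case: ifP; rewrite ?mulrN1 ?mulr0 sub0r.
Qed.

Lemma Amat_kerP k : u *m Amat N k = 0 <-> forall j : nat, (j < N)%N ->
  psum (j%:Z + k%:Z + 1) - psum j%:Z = psum (j%:Z + 1) - psum (j%:Z - k%:Z).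
Proof.
split=> [uA0 j lt_jN | window].
  have /eqP := mulmx_Amat k (Ordinal lt_jN); rewrite uA0 mxE eq_sym subr_eq0 => /eqP /=.
  by move=> eq_sums; lra.
by apply/rowP => j; rewrite mulmx_Amat mxE; have := window j (ltn_ord j); lra.
Qed.
End PrefixSums.

Definition periodic (k : nat) (y : int -> rat) := forall p e : int, y (p + e * k%:Z) = y p.

(* For 1 - k <= r <= k and M = m (mod k), this is S(r + M(k+1)) - S(r - 1 + M(k+1)) for the
   solution of S(t) = S(t-k-1) + y(t) that vanishes on t <= 0 (lemma rec_incr). *)
Definition end_incr (y : int -> rat) (m : nat) (r : int) : rat :=
  if r <= 0 then y (r + m%:Z) - y r
  else if r == 1 then y (1 + m%:Z) else y (r + m%:Z) - y (r - 1).

(* The recurrence solution generated by y is constant on [N, N+k] for N = M(k+1) - s0. *)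
Definition admissible (k m s0 : nat) (y : int -> rat) :=
  forall r, 1 - s0%:Z <= r -> r <= k%:Z - s0%:Z -> end_incr y m r = 0.

Section PeriodicRecurrence.
Variables (k : nat) (y S : int -> rat) (L : int).
Hypothesis y_per : periodic k y.
Hypothesis S_le0 : forall t, t <= 0 -> S t = 0.
Hypothesis S_rec : forall t, 1 <= t -> t <= L -> S t = S (t - k%:Z - 1) + y t.

Lemma rec_incr_shift (j : nat) t : - k%:Z <= t -> t + j%:Z * (k%:Z + 1) + 1 <= L ->
  S (t + j%:Z * (k%:Z + 1) + 1) - S (t + j%:Z * (k%:Z + 1))
  = S (t + 1) - S t + y (t + 1 + j%:Z) - y (t + 1).
Proof.
elim: j => [|j IH] t_ge t_le; first by rewrite mul0r !addr0; ring.
have := IH t_ge ltac:(nia).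
set t' := t + j.+1%:Z * (k%:Z + 1).
rewrite (S_rec (t := t' + 1)) /t'; [|nia|nia].
rewrite (S_rec (t := t')) /t'; [|nia|nia].
have -> : t + j.+1%:Z * (k%:Z + 1) + 1 - k%:Z - 1 = t + j%:Z * (k%:Z + 1) + 1 by lia.
have -> : t + j.+1%:Z * (k%:Z + 1) - k%:Z - 1 = t + j%:Z * (k%:Z + 1) by lia.
have -> : t + j.+1%:Z * (k%:Z + 1) + 1 = (t + 1 + j.+1%:Z) + j.+1%:Z * k%:Z by lia.
have -> : t + j.+1%:Z * (k%:Z + 1) = (t + 1 + j%:Z) + j.+1%:Z * k%:Z by lia.
rewrite !y_per; lra.
Qed.

Lemma rec_incr (m M : nat) (e r : int) : M%:Z = m%:Z + e * k%:Z ->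
  1 - k%:Z <= r -> r <= k%:Z -> r + M%:Z * (k%:Z + 1) <= L ->
  S (r + M%:Z * (k%:Z + 1)) - S (r - 1 + M%:Z * (k%:Z + 1)) = end_incr y m r.
Proof.
move=> eM r_ge r_le r_leL.
have := rec_incr_shift (j := M) (t := r - 1) ltac:(lia) ltac:(lia).
have -> : r - 1 + 1 + M%:Z = (r + m%:Z) + e * k%:Z by lia.
have -> : r - 1 + M%:Z * (k%:Z + 1) + 1 = r + M%:Z * (k%:Z + 1) by ring.
rewrite y_per subrK => ->; rewrite /end_incr.
case: ifP => r_le0; first by rewrite !S_le0; [ring|lia|lia].
case: ifP => [/eqP ->|/eqP r_ne1].
  by rewrite (S_rec (t := 1)) ?S_le0; [ring|lia..].
rewrite (S_rec (t := r)) ?(S_rec (t := r - 1)) ?(S_le0 (r - k%:Z - 1)) ?S_le0; [ring|lia..].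
Qed.

Lemma rec_eq0 : (forall t, y t = 0) -> forall t : int, t <= L -> S t = 0.
Proof.
move=> y0 t; have [n] := ubnP `|t|%N; elim: n t => [|n IH] t lt_tn t_le; first lia.
have [/S_le0 //|t_pos] := boolP (t <= 0).
rewrite S_rec ?y0 ?addr0; [|lia|lia].
by have [/S_le0 //|?] := boolP (t - k%:Z - 1 <= 0); apply: IH; lia.
Qed.
End PeriodicRecurrence.

Lemma periodic_eq0 k y : (0 < k)%N -> periodic k y ->
  (forall t, 1 <= t -> t <= k%:Z -> y t = 0) -> forall t, y t = 0.
Proof.
move=> k_gt0 y_per y0 t.
have -> : t = ((t - 1) %% k%:Z)%Z + 1 + ((t - 1) %/ k%:Z)%Z * k%:Z by lia.
by rewrite y_per y0 //; lia.
Qed.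

Lemma admissible_eq0 k m s0 y : periodic k y -> admissible k m s0 y ->
  (s0 <= k)%N -> (m = 0 -> s0 = 0)%N -> (forall c, 1 <= c -> c <= m%:Z -> y c = 0) ->
  forall t, 1 <= t -> t <= k%:Z -> y t = 0.
Proof.
move=> y_per adm le_s0k m0 y0.
have y_high (p : int) : 1 <= p -> p <= k%:Z - s0%:Z -> y p = 0.
  have [n] := ubnP `|p|%N; elim: n p => [|n IH] p lt_pn p_ge1 p_le; first lia.
  have [|lt_mp] := boolP (p <= m%:Z); first exact: y0.
  have := adm (p - m%:Z) ltac:(lia) ltac:(lia); rewrite /end_incr ifF ?subrK; last lia.
  case: ifP => [/eqP pm1|/eqP pm_ne1 /eqP]; first by have -> : p = 1 + m%:Z by lia.
  by rewrite subr_eq0 => /eqP ->; apply: IH; lia.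
have y_low (p : int) : 1 - s0%:Z <= p -> p <= 0 -> y p = 0.
  have [n] := ubnP `|p|%N; elim: n p => [|n IH] p lt_pn p_ge p_le0; first lia.
  have := adm p p_ge ltac:(lia); rewrite /end_incr ifT // => /eqP.
  rewrite subr_eq0 => /eqP <-.
  by have [?|?] := boolP (1 <= p + m%:Z); [apply: y0 | apply: IH]; lia.
move=> t t_ge1 t_lek; have [|?] := boolP (t <= k%:Z - s0%:Z); first exact: y_high.
by rewrite -(y_per t (-1)); apply: y_low; lia.
Qed.

Section KernelVector.
Variables (N k : nat) (u : 'rV[rat]_N).
Hypothesis k_gt0 : (0 < k)%N.
Hypothesis uA0 : u *m Amat N k = 0.

Definition ker_period (p : int) : rat := psum u (((p - 1) %% k%:Z)%Z + 1).

Lemma ker_period_periodic : periodic k ker_period.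
Proof.
move=> p e; rewrite /ker_period.
have -> : p + e * k%:Z - 1 = e * k%:Z + (p - 1) by ring.
by rewrite modzMDl.
Qed.

Lemma ker_period_small t : 1 <= t -> t <= k%:Z -> ker_period t = psum u t.
Proof. by move=> t_ge1 t_lek; rewrite /ker_period modz_small ?subrK //; lia. Qed.

Lemma psum_rec (t : int) : 1 <= t -> t <= N%:Z + k%:Z ->
  psum u t = psum u (t - k%:Z - 1) + ker_period t.
Proof.
have [n] := ubnP `|t|%N; elim: n t => [|n IH] t lt_tn t_ge1 t_le; first lia.
have [t_lek|lt_kt] := boolP (t <= k%:Z).
  by rewrite ker_period_small // (@psum_le0 _ u (t - _ - 1)) ?add0r //; lia.
have := proj1 (Amat_kerP u k) uA0 (absz (t - k%:Z - 1)%R) ltac:(lia).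
have -> : (absz (t - k%:Z - 1)%R)%:Z = t - k%:Z - 1 by lia.
have -> : t - k%:Z - 1 + k%:Z + 1 = t by ring.
have -> : t - k%:Z - 1 + 1 = t - k%:Z by ring.
have -> : t - k%:Z - 1 - k%:Z = t - k%:Z - k%:Z - 1 by ring.
have shift : ker_period (t - k%:Z) = ker_period t.
  by rewrite -(ker_period_periodic _ 1) mul1r subrK.
by rewrite (IH (t - k%:Z)) ?shift; [lra|lia..].
Qed.

Lemma ker_admissible (m M s0 : nat) (e : int) :
  N%:Z = M%:Z * (k%:Z + 1) - s0%:Z -> M%:Z = m%:Z + e * k%:Z -> (s0 <= k)%N ->
  admissible k m s0 ker_period.
Proof.
move=> eN eM le_s0k r r_ge r_le.
rewrite -(rec_incr ker_period_periodic (@psum_le0 _ u) psum_rec eM); [|lia|lia|lia].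
by rewrite (@psum_ge _ u (r + _)) ?(@psum_ge _ u (r - 1 + _)) ?subrr //; lia.
Qed.

Lemma ker_eq0 (m M s0 : nat) (e : int) :
  N%:Z = M%:Z * (k%:Z + 1) - s0%:Z -> M%:Z = m%:Z + e * k%:Z ->
  (s0 <= k)%N -> (m = 0 -> s0 = 0)%N -> (m <= k)%N ->
  (forall c : nat, (1 <= c <= m)%N -> psum u c%:Z = 0) -> u = 0.
Proof.
move=> eN eM le_s0k m0 le_mk psum0.
have period0 : forall t, ker_period t = 0.
  apply: (periodic_eq0 k_gt0 ker_period_periodic).
  apply: (admissible_eq0 ker_period_periodic (ker_admissible eN eM le_s0k)) => // c c_ge1 c_le.
  have -> : c = `|c|%N%:Z by lia.
  by rewrite ker_period_small ?psum0 //; lia.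
have psum_0 := rec_eq0 (@psum_le0 _ u) psum_rec period0.
apply/rowP => i; have lt_iN := ltn_ord i.
by rewrite -psum_succ !psum_0 ?mxE ?subrr //; lia.
Qed.
End KernelVector.

Section Construction.
Variables (k : nat) (y : int -> rat).

Fixpoint rec_sum (fuel n : nat) : rat :=
  if fuel is f.+1 then (if n is 0%N then 0 else y n%:Z + rec_sum f (n - k.+1)) else 0.

Lemma rec_sum_fuel f g n : (n <= f)%N -> (n <= g)%N -> rec_sum f n = rec_sum g n.
Proof.
elim: f g n => [|f IH] [|g] [|n] //= le_nf le_ng.
by congr (_ + _); apply: IH; lia.
Qed.

Definition rec_seq (t : int) : rat := if t <= 0 then 0 else rec_sum `|t|%N `|t|%N.

Lemma rec_seq_le0 t : t <= 0 -> rec_seq t = 0.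
Proof. by rewrite /rec_seq => ->. Qed.

Lemma rec_seq_rec t : 1 <= t -> rec_seq t = rec_seq (t - k%:Z - 1) + y t.
Proof.
move=> t_ge1; have [n ->] : exists n : nat, t = n.+1%:Z by exists `|t|.-1; lia.
rewrite /rec_seq /= (@rec_sum_fuel _ (n.+1 - k.+1)); [|lia|lia].
case: ifP => [le0|/negbT gt0].
  have -> : (n.+1 - k.+1 = 0)%N by lia.
  by rewrite /= addr0 add0r.
have -> : absz (n.+1%:Z - k%:Z - 1)%R = (n.+1 - k.+1)%N by lia.
by rewrite addrC.
Qed.

Variables (N m M s0 : nat) (e : int).
Hypothesis y_per : periodic k y.
Hypothesis eN : N%:Z = M%:Z * (k%:Z + 1) - s0%:Z.
Hypothesis eM : M%:Z = m%:Z + e * k%:Z.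
Hypothesis le_s0k : (s0 <= k)%N.
Hypothesis adm : admissible k m s0 y.

Lemma rec_seq_flat (j : nat) : (j <= k)%N -> rec_seq (N%:Z + j%:Z) = rec_seq N%:Z.
Proof.
elim: j => [|j IH] le_jk; first by rewrite addr0.
have /eqP := rec_incr (L := N%:Z + k%:Z) (r := j.+1%:Z - s0%:Z) y_per rec_seq_le0
  (fun t t_ge1 _ => rec_seq_rec t_ge1) eM ltac:(lia) ltac:(lia) ltac:(lia).
rewrite adm ?subr_eq0; [|lia|lia].
have -> : j.+1%:Z - s0%:Z + M%:Z * (k%:Z + 1) = N%:Z + j.+1%:Z by lia.
have -> : j.+1%:Z - s0%:Z - 1 + M%:Z * (k%:Z + 1) = N%:Z + j%:Z by lia.
by move/eqP ->; apply: IH; lia.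
Qed.

Definition ker_vec : 'rV[rat]_N := \row_(i < N) (rec_seq (i%:Z + 1) - rec_seq i%:Z).

Lemma psum_ker_vec_nat (n : nat) : (n <= N)%N -> psum ker_vec n%:Z = rec_seq n%:Z.
Proof.
elim: n => [|n IH] le_nN; first by rewrite psum_le0 ?rec_seq_le0.
have := psum_succ ker_vec (Ordinal le_nN); rewrite mxE /= IH; last lia.
by rewrite -addn1 PoszD; lra.
Qed.

Lemma psum_ker_vec t : - k%:Z <= t -> t <= N%:Z + k%:Z -> psum ker_vec t = rec_seq t.
Proof.
move=> t_ge t_le; have [t_le0|t_gt0] := boolP (t <= 0).
  by rewrite psum_le0 ?rec_seq_le0.
have [t_leN|t_gtN] := boolP (t <= N%:Z).
  have -> : t = `|t|%N%:Z by lia.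
  by apply: psum_ker_vec_nat; lia.
rewrite psum_ge ?psum_ker_vec_nat //; last lia.
have -> : t = N%:Z + (absz (t - N%:Z)%R)%:Z by lia.
by rewrite rec_seq_flat //; lia.
Qed.

Lemma ker_vec_ker : ker_vec *m Amat N k = 0.
Proof.
apply/Amat_kerP => j lt_jN; rewrite !psum_ker_vec; [|lia..].
rewrite (rec_seq_rec (t := j%:Z + k%:Z + 1)) ?(rec_seq_rec (t := j%:Z + 1)); [|lia|lia].
have -> : j%:Z + k%:Z + 1 - k%:Z - 1 = j%:Z by ring.
have -> : j%:Z + 1 - k%:Z - 1 = j%:Z - k%:Z by ring.
have -> : j%:Z + k%:Z + 1 = j%:Z + 1 + 1 * k%:Z by ring.
by rewrite y_per; ring.
Qed.

Lemma psum_ker_vec_small c : 1 <= c -> c <= k%:Z -> psum ker_vec c = y c.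
Proof.
move=> c_ge1 c_le; rewrite psum_ker_vec ?(rec_seq_rec c_ge1); [|lia|lia].
by rewrite rec_seq_le0 ?add0r //; lia.
Qed.
End Construction.

Lemma m_le_k (k m a d : nat) : (0 < k)%N -> k = (m.+1 * a + m * d)%N -> (m <= k)%N.
Proof.
move=> k_gt0 ek; case: (posnP a) => [a0|a_gt0].
  move: k_gt0; rewrite ek a0 muln0 add0n => md_gt0.
  by rewrite leq_pmulr //; move: md_gt0; rewrite muln_gt0 => /andP[].
by rewrite ek (leq_trans _ (leq_addr _ _)) // (leq_trans (leqnSn m)) // leq_pmulr.
Qed.

Section Classes.
Variables (k m a d : nat).
Hypothesis k_gt0 : (0 < k)%N.
Hypothesis m_gt0 : (0 < m)%N.
Hypothesis ek : k = (m.+1 * a + m * d)%N.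

(* [window_rep p] represents p mod k in [1 - md, k - md].  Representatives in [1 - md, 0] are
   classified by their residue mod m, those in [1, (m+1)a] by their residue mod m+1; class 0,
   the multiples of m+1, is the one forced to vanish. *)
Definition window_rep (p : int) : int := ((p + (m * d)%N%:Z - 1) %% k%:Z)%Z + 1 - (m * d)%N%:Z.

Definition class_of (p : int) : int :=
  let w := window_rep p in if w <= 0 then ((w - 1) %% m%:Z)%Z + 1 else (w %% m.+1%:Z)%Z.

Lemma window_rep_periodic p e : window_rep (p + e * k%:Z) = window_rep p.
Proof.
rewrite /window_rep; have -> : p + e * k%:Z + (m * d)%N%:Z - 1 = e * k%:Z + (p + (m * d)%N%:Z - 1)
  by ring.
by rewrite modzMDl.
Qed.

Lemma window_rep_id p : 1 - (m * d)%N%:Z <= p -> p <= k%:Z - (m * d)%N%:Z -> window_rep p = p.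
Proof. by move=> p_ge p_le; rewrite /window_rep modz_small; [ring|lia]. Qed.

Lemma class_low p : 1 - (m * d)%N%:Z <= p -> p <= 0 -> class_of p = ((p - 1) %% m%:Z)%Z + 1.
Proof. by move=> p_ge p_le0; rewrite /class_of window_rep_id ?p_le0 //; lia. Qed.

Lemma class_high p : 1 <= p -> p <= k%:Z - (m * d)%N%:Z -> class_of p = (p %% m.+1%:Z)%Z.
Proof. by move=> p_ge p_le; rewrite /class_of window_rep_id ?ifF //; lia. Qed.

Lemma class_periodic p e : class_of (p + e * k%:Z) = class_of p.
Proof. by rewrite /class_of window_rep_periodic. Qed.

Lemma class_small c : 1 <= c -> c <= m%:Z -> class_of c = c.
Proof.
move=> c_ge1 c_le; case: (posnP a) => [a0|a_gt0].
  have := m_le_k k_gt0 ek; rewrite ek a0 muln0 add0n => le_m_md.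
  rewrite -(class_periodic _ (-1)) class_low; [|lia|lia].
  by rewrite (@modz_eq _ (- d%:Z)); lia.
have le_m_ma := leq_pmulr m.+1 a_gt0.
by rewrite class_high ?modz_small //; lia.
Qed.

Lemma class_low_shift r : 1 - (m * d)%N%:Z <= r -> r <= 0 -> class_of (r + m%:Z) = class_of r.
Proof.
move=> r_ge r_le0; rewrite (class_low r_ge r_le0).
have [le0|gt0] := boolP (r + m%:Z <= 0).
  rewrite class_low; [|lia|lia].
  by rewrite (_ : r + m%:Z - 1 = 1 * m%:Z + (r - 1)) ?modzMDl //; ring.
rewrite (@modz_eq (r - 1) (-1)); [|lia|lia].
case: (posnP a) => [a0|a_gt0].
  have := m_le_k k_gt0 ek; rewrite ek a0 muln0 add0n => le_m_md.
  rewrite -(class_periodic _ (-1)) class_low; [|lia|lia].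
  by rewrite (@modz_eq _ (- d%:Z)); lia.
have le_m_ma := leq_pmulr m.+1 a_gt0.
by rewrite class_high ?modz_small; lia.
Qed.

Lemma class_one_shift : 1 <= k%:Z - (m * d)%N%:Z -> class_of (1 + m%:Z) = 0.
Proof.
move=> high_nonempty; case: (posnP a) => [a0|a_gt0]; first by move: high_nonempty; rewrite ek a0; lia.
have le_m_ma := leq_pmulr m.+1 a_gt0.
by rewrite class_high ?(@modz_eq _ 1); lia.
Qed.

Lemma class_high_shift r : 2 <= r -> r <= k%:Z - (m * d)%N%:Z ->
  class_of (r + m%:Z) = class_of (r - 1).
Proof.
move=> r_ge2 r_le; rewrite (class_high (p := r - 1)); [|lia|lia].
have [no_wrap|wrap] := boolP (r + m%:Z <= k%:Z - (m * d)%N%:Z).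
  rewrite class_high; [|lia|lia].
  have -> : r + m%:Z = 1 * m.+1%:Z + (r - 1) by lia.
  by rewrite modzMDl.
have le_m_k := m_le_k k_gt0 ek; rewrite -(class_periodic _ (-1)).
case: (posnP d) => [d0|d_gt0].
  have ek0 : k = (m.+1 * a)%N by rewrite ek d0 muln0 addn0.
  move: r_le wrap; rewrite d0 muln0 => r_le wrap.
  rewrite class_high; [|lia|lia].
  have -> : r + m%:Z + -1 * k%:Z = (1 - a%:Z) * m.+1%:Z + (r - 1) by lia.
  by rewrite modzMDl.
have le_m_md := leq_pmulr m d_gt0.
rewrite class_low; [|lia|lia].
by rewrite (@modz_eq _ (- d%:Z)) ?(@modz_eq (r - 1) (a%:Z - 1)); lia.
Qed.

Lemma class_admissible (f : int -> rat) : f 0 = 0 -> admissible k m (m * d) (f \o class_of).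
Proof.
move=> f0 r r_ge r_le; rewrite /end_incr /=.
case: ifP => [r_le0|/negbT r_gt0]; first by rewrite class_low_shift ?subrr.
case: ifP => [/eqP r1|/eqP r_ne1]; first by rewrite class_one_shift ?f0 //; lia.
by rewrite class_high_shift ?subrr //; lia.
Qed.
End Classes.

Definition prefix_mx (N m : nat) : 'M[rat]_(N, m) := \matrix_(i < N, c < m) (i < c.+1)%:R.

Lemma prefix_mxE N m (v : 'rV[rat]_N) (c : 'I_m) : (v *m prefix_mx N m) 0 c = psum v c.+1%:Z.
Proof.
rewrite mxE /psum [RHS]big_mkcond; apply: eq_bigr => i _.
by rewrite mxE ltz_nat mulr_natr mulrb.
Qed.

Lemma nullity_le (N k m M s0 : nat) (e : int) : (0 < k)%N ->
  N%:Z = M%:Z * (k%:Z + 1) - s0%:Z -> M%:Z = m%:Z + e * k%:Z ->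
  (s0 <= k)%N -> (m = 0 -> s0 = 0)%N -> (m <= k)%N -> (nullity N k <= m)%N.
Proof.
move=> k_gt0 eN eM le_s0k m0 le_mk; rewrite /nullity -mxrank_ker.
rewrite -(mxrank_mul_ker _ (prefix_mx N m)).
suff -> : \rank (kermx (Amat N k) :&: kermx (prefix_mx N m))%MS = 0%N.
  by rewrite addn0 rank_leq_col.
apply/eqP; rewrite mxrank_eq0; apply/rowV0P => v /submx_trans v_cap.
have /sub_kermxP vA0 := v_cap _ _ (capmxSl _ _).
have /sub_kermxP vP0 := v_cap _ _ (capmxSr _ _).
apply: (ker_eq0 k_gt0 vA0 eN eM) => // c /andP[c_ge1 c_le].
have lt_c1m : (c.-1 < m)%N by lia.
by have := prefix_mxE v (Ordinal lt_c1m); rewrite vP0 mxE /= prednK.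
Qed.

Lemma nullity_ge (N k m a d M : nat) (e : int) : (0 < k)%N -> k = (m.+1 * a + m * d)%N ->
  N%:Z = M%:Z * (k%:Z + 1) - (m * d)%N%:Z -> M%:Z = m%:Z + e * k%:Z -> (m <= nullity N k)%N.
Proof.
move=> k_gt0 ek eN eM; case: (posnP m) => [-> //|m_gt0].
have le_s0k : (m * d <= k)%N by rewrite ek leq_addl.
pose y (c : 'I_m) : int -> rat := (fun z : int => (z == c.+1%:Z)%:R) \o class_of k m d.
have y_per c : periodic k (y c) by move=> p e'; rewrite /y /= class_periodic.
have y_adm c : admissible k m (m * d) (y c).
  by apply: (class_admissible k_gt0 m_gt0 ek); rewrite eqz_nat.
pose B : 'M[rat]_(m, N) := \matrix_(c < m) ker_vec k (y c) N.
have BK : (B <= kermx (Amat N k))%MS.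
  apply/sub_kermxP/row_matrixP => c; rewrite row_mul rowK row0.
  exact: ker_vec_ker (y_per c) eN eM le_s0k (y_adm c).
have BP : B *m prefix_mx N m = 1%:M.
  apply/matrixP => c c'; have := prefix_mxE (row c B) c'; rewrite -row_mul mxE => ->.
  have lt_c'm := ltn_ord c'; have le_mk := m_le_k k_gt0 ek.
  rewrite rowK (psum_ker_vec_small (y_per c) eN eM le_s0k (y_adm c)); [|lia|lia].
  by rewrite /y /= (class_small k_gt0 m_gt0 ek) ?eqz_nat ?eqSS ?mxE 1?eq_sym //; lia.
rewrite /nullity -mxrank_ker; apply: leq_trans (mxrankS BK).
by rewrite -{1}(mxrank1 rat m) -BP mxrankM_maxl.
Qed.

Lemma nullity_Amat (N k m a d : nat) : (0 < k)%N -> k = (m.+1 * a + m * d)%N ->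
  (N%:Z = m%:Z * (k%:Z + 1 - d%:Z) %[mod k%:Z * (k%:Z + 1)])%Z -> nullity N k = m.
Proof.
move=> k_gt0 ek /eqz_modP[Q eQ].
have M_ge0 : 0 <= m%:Z + Q * k%:Z by nia.
have [M eM] : exists M : nat, M%:Z = m%:Z + Q * k%:Z.
  by exists (absz (m%:Z + Q * k%:Z)%R); rewrite gez0_abs.
have eN : N%:Z = M%:Z * (k%:Z + 1) - (m * d)%N%:Z by rewrite eM; lia.
have le_mk := m_le_k k_gt0 ek.
apply/eqP; rewrite eqn_leq (nullity_le k_gt0 eN eM) ?(nullity_ge k_gt0 ek eN eM) //; lia.
Qed.

Lemma rep_eqmod (n : int) (k : nat) : (0 < k)%N ->
  ((rep n k)%:Z = n %[mod k%:Z * (k%:Z + 1)])%Z.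
Proof.
move=> k_gt0; rewrite /rep.
have -> : (k ^ 2 + k)%N%:Z = k%:Z * (k%:Z + 1) by rewrite -mulnn; lia.
rewrite PoszD gez0_abs ?modz_ge0 //; last lia.
by rewrite modzDmr addrC subrK.
Qed.

Theorem theorem8p10 (k : nat) (a b : int) :
  (1 <= k)%N -> 1 <= b -> 0 <= a -> a <= b ->
  (k%:Z = a %[mod b])%Z ->
  (Nnull (((k%:Z + 1 + a - b) * (k%:Z - a)) %/ b)%Z k)%:Z = ((k%:Z - a) %/ b)%Z.
Proof.
move=> k_gt0 b_ge1 a_ge0 le_ab /eqz_modP[q ek].
have [a' ea] : exists a' : nat, a = a'%:Z by exists (absz a); lia.
have [d eb] : exists d : nat, b = a + d%:Z by exists (absz (b - a)%R); lia.
have [m eq] : exists m : nat, q = m%:Z by exists (absz q); nia.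
subst a b q.
have ek_m : k%:Z - a'%:Z = m%:Z * (a'%:Z + d%:Z) by rewrite ek; ring.
have b_neq0 : a'%:Z + d%:Z != 0 by lia.
rewrite ek_m mulzK // mulrA mulzK //; congr Posz.
rewrite /Nnull (@nullity_Amat _ k m a' d) //; first lia.
by rewrite rep_eqmod //; congr (_ %% _)%Z; ring.
Qed.
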